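(* Let $D$ be an oriented graph whose missing graph is a vertex-disjoint union of paths. Then every vertex of the dependency digraph $\Delta(D)$ has out-degree at most 2 and in-degree at most 2.
   Context: All digraphs are finite oriented graphs. $N^+(v)$ is the out-neighborhood; $N^{++}(v)$ is the set of vertices $w\notin N^+(v)\cup\{v\}$ with $u\to w$ for some $u\in N^+(v)$. A missing edge is a pair of distinct non-adjacent vertices; the missing graph is formed by the missing edges. For missing edges $\{x,y\},\{a,b\}$, $\{x,y\}$ loses to $\{a,b\}$ if the endpoints can be labelled so that $x\to a$, $b\notin N^+(x)\cup N^{++}(x)$, $y\to b$, $a\notin N^+(y)\cup N^{++}(y)$. The dependency digraph $\Delta(D)$ has the missing edges as vertices and an arc $(e,e')$ whenever $e$ loses to $e'$. *)

From mathcomp Require Import all_boot.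
Set Implicit Arguments. Unset Strict Implicit. Unset Printing Implicit Defensive.

Section Digraphs.
Variable T : finType.
Variable arc : rel T.

Definition oriented : Prop :=
  (forall x, ~~ arc x x) /\ (forall x y, arc x y -> ~~ arc y x).

Definition outN (v : T) : {set T} := [set w | arc v w].

Definition secN (v : T) : {set T} :=
  [set w | (w \notin outN v) && (w != v) && [exists u, arc v u && arc u w]].

Definition missing (x y : T) : bool := [&& x != y, ~~ arc x y & ~~ arc y x].

Definition missing_edge (e : {set T}) : bool :=
  [exists x, exists y, missing x y && (e == [set x; y])].

Definition missing_union_of_paths : Prop :=
  (forall v, #|[set w | missing v w]| <= 2) /\
  (forall c : seq T, 3 <= size c -> uniq c -> ~~ cycle missing c).

Definition loses (e e' : {set T}) : bool :=
  [exists x, exists y, exists a, exists b,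
     [&& e == [set x; y], e' == [set a; b],
         arc x a, b \notin outN x :|: secN x,
         arc y b & a \notin outN y :|: secN y]].

Definition dep_outdeg (e : {set T}) : nat :=
  #|[set e' | missing_edge e' && loses e e']|.
Definition dep_indeg (e : {set T}) : nat :=
  #|[set e' | missing_edge e' && loses e' e]|.

End Digraphs.

From mathcomp Require Import all_boot.
From mathcomp Require Import zify.
Set Implicit Arguments. Unset Strict Implicit. Unset Printing Implicit Defensive.

(* If {x,y} loses to {a,b} and to {c,d} (with the labelling x -> a, y -> b and
   x -> c, y -> d), then a and d are non-adjacent: an arc between them would
   put d in N^++(x) or a in N^++(y).  So the heads and the tails of the missing
   edges beaten by {x,y} span a complete bipartite subgraph of the missing
   graph, and the same holds for the missing edges beating {x,y}.  In a
   disjoint union of paths such a subgraph has no 4-cycle, so one side has at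
   most one vertex, and the other side lies in its neighbourhood, which has at
   most two vertices: at most 2 pairs remain. *)

Lemma card_set2_pairs_le (T : finType) (P : rel T) :
  #|[set e : {set T} | [exists a, exists b, P a b && (e == [set a; b])]]|
    <= #|[set a | [exists b, P a b]]| * #|[set b | [exists a, P a b]]|.
Proof.
rewrite -cardsX; apply: leq_trans (leq_imset_card (fun p => [set p.1; p.2]) _).
apply/subset_leq_card/subsetP => e; rewrite inE.
move=> /existsP [a /existsP [b /andP [Pab /eqP ->]]].
by apply/imsetP; exists (a, b); rewrite // !inE; apply/andP; split; apply/existsP;
  [exists b | exists a].
Qed.

Lemma set2_eq_cases (T : finType) (x0 y0 x y : T) :
  x0 != y0 -> [set x0; y0] = [set x; y] ->
  (x = x0 /\ y = y0) \/ (x = y0 /\ y = x0).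
Proof.
move=> neq E; have := set21 x y; have := set22 x y; rewrite -E.
move=> /set2P [] ? /set2P [] ?; subst x y; try by [left | right].
all: by move/(congr1 (fun A : {set T} => #|A|)): E; rewrite setUid cards1 cards2 neq.
Qed.

Section Dependency.
Variables (T : finType) (arc : rel T).

Lemma missingC x y : missing arc x y = missing arc y x.
Proof. by rewrite /missing eq_sym [~~ arc x y && _]andbC. Qed.

Definition loses_via (x y a b : T) : bool :=
  [&& arc x a, b \notin outN arc x :|: secN arc x,
      arc y b & a \notin outN arc y :|: secN arc y].

Lemma loses_viaC x y a b : loses_via x y a b = loses_via y x b a.
Proof. by apply/and4P/and4P => -[]. Qed.

Lemma loses_set2l x y e' : x != y -> loses arc [set x; y] e' ->
  [exists a, exists b, loses_via x y a b && (e' == [set a; b])].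
Proof.
move=> neq /existsP [x' /existsP [y' /existsP [a /existsP [b]]]].
move=> /and3P [/eqP E /eqP -> L]; change (is_true (loses_via x' y' a b)) in L.
case: (set2_eq_cases neq E) => -[Ex Ey]; rewrite {}Ex {}Ey in L.
  by apply/existsP; exists a; apply/existsP; exists b; rewrite L eqxx.
by apply/existsP; exists b; apply/existsP; exists a; rewrite setUC loses_viaC L eqxx.
Qed.

Lemma loses_set2r x y e : x != y -> loses arc e [set x; y] ->
  [exists a, exists b, loses_via a b x y && (e == [set a; b])].
Proof.
move=> neq /existsP [a /existsP [b /existsP [x' /existsP [y']]]].
move=> /and3P [/eqP -> /eqP E L]; change (is_true (loses_via a b x' y')) in L.
case: (set2_eq_cases neq E) => -[Ex Ey]; rewrite {}Ex {}Ey in L.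
  by apply/existsP; exists a; apply/existsP; exists b; rewrite L eqxx.
by apply/existsP; exists b; apply/existsP; exists a; rewrite setUC loses_viaC L eqxx.
Qed.

Lemma loses_via_missing_targets x y :
  ~~ arc x y -> ~~ arc y x -> forall a b c d,
  loses_via x y a b -> loses_via x y c d -> missing arc a d.
Proof.
move=> nxy nyx a b c d /and4P [xa _ _ ha] /and4P [_ hd yd _].
move: ha hd; rewrite !inE !negb_or => /andP [nya nay] /andP [nxd ndx].
have ad : a != d by apply: contraNneq nxd => <-.
have dx : d != x by apply: contraNneq nyx => <-.
have ay : a != y by apply: contraNneq nxy => <-.
rewrite /missing ad /=; apply/andP; split.
  move: ndx; apply: contraNN => arc_ad; rewrite nxd dx.
  by apply/existsP; exists a; rewrite xa.
move: nay; apply: contraNN => arc_da; rewrite nya ay.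
by apply/existsP; exists d; rewrite yd.
Qed.

Lemma loses_via_missing_sources x y :
  ~~ arc x y -> ~~ arc y x -> forall a b c d,
  loses_via a b x y -> loses_via c d x y -> missing arc a d.
Proof.
move=> nxy nyx a b c d /and4P [ax ha _ _] /and4P [_ _ dy hd].
move: ha hd; rewrite !inE !negb_or => /andP [nay nya] /andP [ndx nxd].
have ad : a != d by apply: contraNneq ndx => <-.
have ya : y != a by apply: contraNneq nyx => ->.
have xd : x != d by apply: contraNneq nxy => ->.
rewrite /missing ad /=; apply/andP; split.
  move: nya; apply: contraNN => arc_ad; rewrite nay ya.
  by apply/existsP; exists d; rewrite arc_ad dy.
move: nxd; apply: contraNN => arc_da; rewrite ndx xd.
by apply/existsP; exists a; rewrite arc_da ax.
Qed.

Section UnionOfPaths.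
Hypothesis paths : missing_union_of_paths arc.

Lemma missing_biclique_thin (A B : {set T}) :
  {in A & B, forall a b, missing arc a b} -> #|A| <= 1 \/ #|B| <= 1.
Proof.
move=> AB.
case: (leqP #|A| 1) => [|/card_gt1P [a1 [a2 [a1A a2A a12]]]]; first by left.
case: (leqP #|B| 1) => [|/card_gt1P [b1 [b2 [b1B b2B b12]]]]; first by right.
have m11 := AB _ _ a1A b1B; have m12 := AB _ _ a1A b2B.
have m21 := AB _ _ a2A b1B; have m22 := AB _ _ a2A b2B.
have neq a b : missing arc a b -> a != b by case/and3P.
have U : uniq [:: a1; b1; a2; b2].
  rewrite /= !inE !negb_or (neq _ _ m11) (neq _ _ m12) (neq _ _ m22) a12 b12.
  by rewrite eq_sym (neq _ _ m21).
case: paths => _ /(_ [:: a1; b1; a2; b2] isT U) /negP []; rewrite /= m11 m22.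
by rewrite -(missingC a2 b1) m21 -(missingC a1 b2) m12.
Qed.

Lemma missing_biclique_card (A B : {set T}) :
  {in A & B, forall a b, missing arc a b} -> #|A| * #|B| <= 2.
Proof.
move=> AB; have [deg _] := paths.
case: (missing_biclique_thin AB) => small.
- case: (set_0Vmem A) => [-> | [a aA]]; first by rewrite cards0.
  suff : #|B| <= 2 by nia.
  apply: leq_trans (deg a); apply/subset_leq_card/subsetP => b bB.
  by rewrite inE AB.
- case: (set_0Vmem B) => [-> | [b bB]]; first by rewrite cards0 muln0.
  suff : #|A| <= 2 by nia.
  apply: leq_trans (deg b); apply/subset_leq_card/subsetP => a aA.
  by rewrite inE missingC AB.
Qed.

Lemma card_missing_pairs_le2 (P : rel T) :
  (forall a b c d, P a b -> P c d -> missing arc a d) ->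
  #|[set e : {set T} | [exists a, exists b, P a b && (e == [set a; b])]]| <= 2.
Proof.
move=> PP; apply: leq_trans (card_set2_pairs_le P) _.
apply: missing_biclique_card => a b; rewrite !inE.
by move=> /existsP [b' Pab'] /existsP [a' Pa'b]; apply: PP Pab' Pa'b.
Qed.

End UnionOfPaths.
End Dependency.

Theorem proposition4p4 (T : finType) (arc : rel T) :
  oriented arc -> missing_union_of_paths arc ->
  forall e : {set T}, missing_edge arc e ->
    dep_outdeg arc e <= 2 /\ dep_indeg arc e <= 2.
Proof.
move=> _ paths e /existsP [x /existsP [y /andP [/and3P [neq nxy nyx] /eqP ->]]].
split.
- apply: leq_trans _ (card_missing_pairs_le2 paths (P := loses_via arc x y)
                         (loses_via_missing_targets nxy nyx)).
  apply/subset_leq_card/subsetP => e'; rewrite !inE => /andP [_].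
  exact: loses_set2l.
- apply: leq_trans _ (card_missing_pairs_le2 paths
                         (P := fun a b => loses_via arc a b x y)
                         (loses_via_missing_sources nxy nyx)).
  apply/subset_leq_card/subsetP => e'; rewrite !inE => /andP [_].
  exact: loses_set2r.
Qed.
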